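(* Let $n\ge1$ and $M\le N$ be integers. For each chain (totally ordered subset) $C$ of pure diagrams lying in $B_{M,N}$, let $\sigma_C=\{\sum_{\pi\in C}\lambda_\pi\pi:\lambda_\pi\ge0\}\subseteq B_{M,N}$. The cones $\sigma_C$ form a simplicial fan; in particular, any element of $B_{M,N}$ that can be written as a linear combination with strictly positive coefficients of the elements of some chain of pure diagrams in $B_{M,N}$ can be written so in exactly one way (the chain and the coefficients are uniquely determined).
   Context: $B_{M,N}$ is the $\mathbb Q$-vector space of arrays $\beta=(\beta_{i,j})$ indexed by $0\le i\le n$, $j\in\mathbb Z$, with $\beta_{i,j}=0$ unless $M+i\le j\le N+i$. For integers $d_0<d_1<\dots<d_t$ with $0\le t\le n$, the pure diagram $\pi(d_0,\dots,d_t)$ is the array whose entry in position $(i,d_i)$ is $(-1)^i\prod_{0\le j\le t,\,j\ne i}\frac{1}{d_j-d_i}$ for $i=0,\dots,t$, and whose other entries are $0$; its codimension is $t$. It lies in $B_{M,N}$ iff $M+i\le d_i\le N+i$ for all $i$. Partial order: $\pi(d_0,\dots,d_t)\le\pi(d'_0,\dots,d'_u)$ iff $t\ge u$ and $d_i\le d'_i$ for $i=0,\dots,u$. *)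

From mathcomp Require Import all_boot all_order all_algebra.
Set Implicit Arguments. Unset Strict Implicit. Unset Printing Implicit Defensive.
Import Order.TTheory GRing.Theory Num.Theory.
Local Open Scope ring_scope.

Definition diagram := nat -> int -> rat.

(* A degree sequence d = [:: d_0; ...; d_t] (t = size d - 1). *)
Definition degseq := seq int.

Definition pure (d : degseq) : diagram := fun i j =>
  if (i < size d)%N && (j == nth 0 d i) then
    (-1) ^+ i * \prod_(k < size d | k != i :> nat)
                   ((nth 0 d k - nth 0 d i)%:~R : rat)^-1
  else 0.

Definition pure_inB (n : nat) (M N : int) (d : degseq) : bool :=
  [&& (0 < size d)%N, (size d <= n.+1)%N, sorted (fun a b : int => a < b) d &
      all (fun i => (M + i%:Z <= nth 0 d i) && (nth 0 d i <= N + i%:Z))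
          (iota 0 (size d))].

Definition pure_le (d d' : degseq) : bool :=
  (size d' <= size d)%N &&
  all (fun i => nth 0 d i <= nth 0 d' i) (iota 0 (size d')).

Definition is_chain (n : nat) (M N : int) (C : seq degseq) : Prop :=
  [/\ uniq C, all (pure_inB n M N) C &
      forall d d', d \in C -> d' \in C -> pure_le d d' || pure_le d' d].

Definition lincomb (C : seq degseq) (lam : degseq -> rat) : diagram :=
  fun i j => \sum_(d <- C) lam d * pure d i j.

Definition in_cone (C : seq degseq) (beta : diagram) : Prop :=
  exists lam : degseq -> rat,
    (forall d, d \in C -> 0 <= lam d) /\
    (forall i j, beta i j = lincomb C lam i j).

(* The nonzero entries of a pure diagram pi(d) sit at the positions (i, d_i), and
   they are positive: the sign (-1)^i cancels against the i negative factors
   (d_k - d_i)^-1 with k < i.  In a chain, the minimum m owns a position (i, m_i)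
   reached by no other member: take i where m lies strictly below the second
   smallest member m2, or where m2 is already too short.  Reading off the
   coefficient of m there and removing m gives linear independence.
   With positive coefficients nothing cancels, so the support of a combination is
   the union of the supports of its members.  The minimum of the chain is then
   determined by that support (it is the longest member, with the smallest entry in
   every row), so two positive representations share their minimum and, by the
   private position, its coefficient; removing it and iterating shows that they
   coincide.  Applying this to the supports of two representations in sigma_C and
   sigma_C' shows that the cones meet in the face spanned by their common members. *)

From mathcomp Require Import all_boot all_order all_algebra.
Import Order.TTheory GRing.Theory Num.Theory.
Set Implicit Arguments. Unset Strict Implicit. Unset Printing Implicit Defensive.
Local Open Scope ring_scope.

Lemma signed_prod_gt0 (R : realDomainType) i (F : nat -> R) :
  (forall k, (k < i)%N -> F k < 0) -> 0 < (-1) ^+ i * \prod_(k < i) F k.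
Proof.
move=> Fneg; rewrite -[in X in (-1) ^+ X](card_ord i) -prodrN.
by apply: prodr_gt0 => k _; rewrite oppr_gt0 Fneg.
Qed.

Lemma pureE d i j :
  pure d i j = if (i < size d)%N && (j == nth 0 d i) then pure d i (nth 0 d i) else 0.
Proof. by rewrite /pure; case: (i < size d)%N; case: eqP => // _; rewrite eqxx. Qed.

Lemma pure_gt0 d i :
  sorted <%R d -> (i < size d)%N -> 0 < pure d i (nth 0 d i).
Proof.
move=> d_sorted lt_i_d; rewrite /pure lt_i_d eqxx /=.
have d_lt a b : (a < size d)%N -> (b < size d)%N -> (a < b)%N -> nth 0 d a < nth 0 d b.
  by move=> lt_a lt_b; exact: (sorted_ltn_nth (@lt_trans _ int) 0 d_sorted).
rewrite (bigID (fun k : 'I_(size d) => (k < i)%N)) /= mulrA; apply: mulr_gt0.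
  rewrite (eq_bigl (fun k : 'I_(size d) => (k < i)%N)); last first.
    by move=> k /=; case: ltngtP.
  set F := fun k => ((nth 0 d k - nth 0 d i)%:~R : rat)^-1.
  rewrite -(big_ord_widen_cond _ xpredT F) ?(ltnW lt_i_d) //.
  apply: (signed_prod_gt0 (F := F)) => k lt_k_i.
  by rewrite invr_lt0 ltrz0 subr_lt0 d_lt // (ltn_trans lt_k_i).
apply: prodr_gt0 => k /andP[neq_k_i ge_k_i].
have lt_i_k : (i < k)%N by move: neq_k_i ge_k_i; case: ltngtP.
by rewrite invr_gt0 ltr0z subr_gt0 d_lt.
Qed.

Lemma pure_ge0 d i j : sorted <%R d -> 0 <= pure d i j.
Proof.
move=> d_sorted; rewrite pureE; case: ifP => // /andP[lt_i_d _].
exact/ltW/pure_gt0.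
Qed.

Lemma pure_le_nth d d' i : pure_le d d' -> (i < size d')%N -> nth 0 d i <= nth 0 d' i.
Proof. by case/andP=> _ /allP le_dd' lt_i_d'; apply: le_dd'; rewrite mem_iota. Qed.

Lemma pure_le_refl : reflexive pure_le.
Proof. by move=> d; rewrite /pure_le leqnn; apply/allP. Qed.

Lemma pure_le_trans : transitive pure_le.
Proof.
move=> d2 d1 d3 le12 le23; have /andP[size12 _] := le12; have /andP[size23 _] := le23.
rewrite /pure_le (leq_trans size23 size12); apply/allP => i.
rewrite mem_iota => /andP[_ lt_i_d3].
exact: le_trans (pure_le_nth le12 (leq_trans lt_i_d3 size23)) (pure_le_nth le23 lt_i_d3).
Qed.

Lemma pure_le_anti d d' : pure_le d d' -> pure_le d' d -> d = d'.
Proof.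
move=> le_dd' le_d'd; have /andP[size_d'd _] := le_dd'; have /andP[size_dd' _] := le_d'd.
have eq_size : size d = size d' by apply/eqP; rewrite eqn_leq size_dd'.
apply: (eq_from_nth (x0 := 0)) => // i lt_i_d.
by apply: le_anti; rewrite (pure_le_nth le_dd') ?(pure_le_nth le_d'd) -?eq_size.
Qed.

Lemma pure_nle_index d d' : ~~ pure_le d' d ->
  exists2 i, (i < size d)%N & (size d' <= i)%N || (nth 0 d i < nth 0 d' i).
Proof.
rewrite /pure_le negb_and -ltnNge => /orP[lt_size | /allPn[i]].
  by exists (size d'); rewrite ?leqnn.
rewrite mem_iota -ltNge => /andP[_ lt_i_d] lt_di.
by exists i; rewrite ?lt_di ?orbT.
Qed.

Lemma min_pure_le (C : seq degseq) : {in C &, total pure_le} -> C != [::] ->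
  exists2 m, m \in C & {in C, forall d, pure_le m d}.
Proof.
move=> C_total C_nil; have memS := mem_sort pure_le C.
have := sort_sorted_in C_total (allss C); have := size_sort pure_le C.
case: (sort pure_le C) memS => [|m s] memS.
  by move/esym/eqP; rewrite size_eq0 (negPf C_nil).
move=> _ sorted_ms.
exists m; first by rewrite -memS mem_head.
move=> d; rewrite -memS inE => /predU1P[-> | d_s]; first exact: pure_le_refl.
exact: (allP (order_path_min pure_le_trans sorted_ms)).
Qed.

Definition pure_chain (C : seq degseq) : Prop :=
  [/\ uniq C, {in C, forall d, (0 < size d)%N && sorted <%R d} & {in C &, total pure_le}].

Lemma is_chain_pure_chain n M N C : is_chain n M N C -> pure_chain C.
Proof.
case=> C_uniq /allP C_inB C_total; split=> // d /C_inB /and4P[d_nil _ d_sorted _].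
by rewrite d_nil.
Qed.

Lemma pure_chain_sub (C C' : seq degseq) :
  pure_chain C -> uniq C' -> {subset C' <= C} -> pure_chain C'.
Proof.
case=> _ C_deg C_total C'_uniq sub_C'C; split=> // [d /sub_C'C | d d' /sub_C'C + /sub_C'C].
  exact: C_deg.
exact: C_total.
Qed.

Lemma pure_chain_rem C m : pure_chain C -> pure_chain (rem m C).
Proof.
move=> C_chain; apply: (pure_chain_sub C_chain) => [|d]; last exact: mem_rem.
by rewrite rem_uniq //; case: C_chain.
Qed.

Lemma pure_chain_sorted C : pure_chain C -> {in C, forall d, sorted <%R d}.
Proof. by case=> _ C_deg _ d /C_deg /andP[]. Qed.

Lemma min_pure_private (C : seq degseq) m : {in C &, total pure_le} ->
  m \in C -> {in C, forall d, pure_le m d} -> (0 < size m)%N ->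
  exists2 i, (i < size m)%N & {in C, forall d, d != m -> pure d i (nth 0 m i) = 0}.
Proof.
move=> C_total mC m_min m_nil; set C1 := [seq d <- C | d != m].
have mem_C1 d : d \in C -> d != m -> d \in C1 by rewrite mem_filter => -> ->.
have [C1_nil | C1_nil] := eqVneq C1 [::].
  by exists 0%N => // d dC /(mem_C1 _ dC); rewrite C1_nil.
have C1_total : {in C1 &, total pure_le}.
  by move=> d d'; rewrite !mem_filter => /andP[_ dC] /andP[_ d'C]; apply: C_total.
have [m2] := min_pure_le C1_total C1_nil; rewrite mem_filter => /andP[m2_m m2C] m2_min.
have m2_nle : ~~ pure_le m2 m.
  by apply: contra m2_m => le_m2m; rewrite (pure_le_anti le_m2m (m_min _ m2C)).
have [i lt_i_m m2_far] := pure_nle_index m2_nle.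
exists i => // d dC d_m; rewrite pureE; case: ifP => // /andP[lt_i_d /eqP eq_md].
have le_m2d := m2_min d (mem_C1 d dC d_m); have /andP[size_dm2 _] := le_m2d.
move: m2_far; rewrite leqNgt (leq_trans lt_i_d size_dm2) /= eq_md.
by rewrite ltNge pure_le_nth.
Qed.

Lemma lincomb_rem C lam m i j : uniq C -> m \in C ->
  lincomb C lam i j = lam m * pure m i j + lincomb (rem m C) lam i j.
Proof. by move=> C_uniq mC; rewrite /lincomb (perm_big _ (perm_to_rem mC)) big_cons. Qed.

Lemma lincomb_private C lam m i j : uniq C -> m \in C ->
  {in C, forall d, d != m -> pure d i j = 0} -> lincomb C lam i j = lam m * pure m i j.
Proof.
move=> C_uniq mC m_private; rewrite (lincomb_rem _ _ _ C_uniq mC) /lincomb big1_seq ?addr0 //.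
move=> d /andP[_]; rewrite (mem_rem_uniq _ C_uniq) inE => /andP[d_m dC].
by rewrite m_private ?mulr0.
Qed.

Lemma lincomb_ge0 C lam i j : {in C, forall d, sorted <%R d} ->
  {in C, forall d, 0 <= lam d} -> 0 <= lincomb C lam i j.
Proof.
move=> C_sorted lam_ge0; rewrite /lincomb big_seq; apply: sumr_ge0 => d dC.
by rewrite mulr_ge0 ?lam_ge0 ?pure_ge0 ?C_sorted.
Qed.

Lemma lincomb_support C lam i j : lincomb C lam i j != 0 ->
  exists2 d, d \in C & (i < size d)%N && (j == nth 0 d i).
Proof.
have [/hasP[d dC d_ij] _ | /hasPn d_ij] :=
  boolP (has (fun d => (i < size d)%N && (j == nth 0 d i)) C); first by exists d.
rewrite /lincomb big1_seq ?eqxx // => d /andP[_ dC].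
by rewrite pureE (negPf (d_ij d dC)) mulr0.
Qed.

Lemma pure_chain_lincomb_eq0 C lam : pure_chain C ->
  (forall i j, lincomb C lam i j = 0) -> {in C, forall d, lam d = 0}.
Proof.
have [k] := ubnP (size C); elim: k C => // k IHk C lt_C_k C_chain lincomb0.
have [-> // | C_nil] := eqVneq C [::].
have [C_uniq C_deg C_total] := C_chain.
have [m mC m_min] := min_pure_le C_total C_nil.
have /andP[m_nil m_sorted] := C_deg m mC.
have [i lt_i_m m_private] := min_pure_private C_total mC m_min m_nil.
have lam_m : lam m = 0.
  move: (lincomb0 i (nth 0 m i)); rewrite (lincomb_private lam C_uniq mC m_private).
  by move/eqP; rewrite mulf_eq0 (gt_eqF (pure_gt0 m_sorted lt_i_m)) orbF => /eqP.
have lincomb0' i' j' : lincomb (rem m C) lam i' j' = 0.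
  by move: (lincomb0 i' j'); rewrite (lincomb_rem _ _ _ C_uniq mC) lam_m mul0r add0r.
have lt_rem_k : (size (rem m C) < k)%N.
  by rewrite size_rem // -ltnS prednK // lt0n size_eq0.
move=> d dC; have [-> // | d_m] := eqVneq d m.
apply: (IHk _ lt_rem_k (pure_chain_rem m C_chain) lincomb0').
by rewrite (mem_rem_uniq _ C_uniq) inE d_m.
Qed.

Lemma lincomb_gt0 C lam d i : pure_chain C -> {in C, forall d, 0 < lam d} ->
  d \in C -> (i < size d)%N -> 0 < lincomb C lam i (nth 0 d i).
Proof.
move=> C_chain lam_gt0 dC lt_i_d; have [C_uniq _ _] := C_chain.
have C_sorted := pure_chain_sorted C_chain.
have rest_ge0 : 0 <= lincomb (rem d C) lam i (nth 0 d i).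
  by apply: lincomb_ge0 => d' /mem_rem d'C; rewrite ?C_sorted ?ltW ?lam_gt0.
rewrite (lincomb_rem lam _ _ C_uniq dC) ltr_wpDr //.
by rewrite mulr_gt0 ?lam_gt0 ?pure_gt0 ?C_sorted.
Qed.

Lemma pos_lincomb_eq0 C lam : pure_chain C -> {in C, forall d, 0 < lam d} ->
  (forall i j, lincomb C lam i j = 0) -> C = [::].
Proof.
case: C => // d C C_chain lam_gt0 lincomb0; have [_ C_deg _] := C_chain.
have /andP[d_nil _] := C_deg d (mem_head d C).
by have := lincomb_gt0 C_chain lam_gt0 (mem_head d C) d_nil; rewrite lincomb0 ltxx.
Qed.

Section PositiveRepresentations.

Variables (C C' : seq degseq) (lam lam' : degseq -> rat).
Hypotheses (C_chain : pure_chain C) (C'_chain : pure_chain C').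
Hypothesis lam'_gt0 : {in C', forall d, 0 < lam' d}.
Hypothesis eq_lincomb : forall i j, lincomb C lam i j = lincomb C' lam' i j.

Lemma min_pure_lb m : {in C, forall d, pure_le m d} -> {in C', forall d, pure_le m d}.
Proof.
move=> m_min m' m'C'.
have m_below i : (i < size m')%N -> (i < size m)%N && (nth 0 m i <= nth 0 m' i).
  move=> lt_i_m'; have := lincomb_gt0 C'_chain lam'_gt0 m'C' lt_i_m'.
  rewrite -eq_lincomb => /gt_eqF/negbT/lincomb_support[d dC /andP[lt_i_d /eqP->]].
  have le_md := m_min d dC; have /andP[size_dm _] := le_md.
  by rewrite (leq_trans lt_i_d size_dm) pure_le_nth.
apply/andP; split; last by apply/allP => i; rewrite mem_iota => /andP[_ /m_below/andP[]].
have [-> // | m'_pos] := posnP (size m').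
have := m_below (size m').-1; rewrite ltn_predL m'_pos => /(_ isT)/andP[].
by rewrite prednK.
Qed.

Lemma min_coef_le m :
  m \in C -> {in C, forall d, pure_le m d} -> m \in C' -> lam' m <= lam m.
Proof.
move=> mC m_min mC'; have [C_uniq C_deg C_total] := C_chain; have [C'_uniq _ _] := C'_chain.
have /andP[m_nil m_sorted] := C_deg m mC.
have [i lt_i_m m_private] := min_pure_private C_total mC m_min m_nil.
have rest_ge0 : 0 <= lincomb (rem m C') lam' i (nth 0 m i).
  apply: lincomb_ge0 => d /mem_rem dC'; first exact: pure_chain_sorted C'_chain d dC'.
  exact/ltW/lam'_gt0.
have := eq_lincomb i (nth 0 m i).
rewrite (lincomb_private lam C_uniq mC m_private) (lincomb_rem lam' _ _ C'_uniq mC').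
by move=> eq_at_m; rewrite -(ler_pM2r (pure_gt0 m_sorted lt_i_m)) eq_at_m lerDl.
Qed.

End PositiveRepresentations.

Lemma pos_lincomb_inj C C' lam lam' : pure_chain C -> pure_chain C' ->
  {in C, forall d, 0 < lam d} -> {in C', forall d, 0 < lam' d} ->
  (forall i j, lincomb C lam i j = lincomb C' lam' i j) ->
  C =i C' /\ {in C, forall d, lam d = lam' d}.
Proof.
have [k] := ubnP (size C); elim: k C C' lam lam' => // k IHk C C' lam lam' lt_C_k.
move=> C_chain C'_chain lam_gt0 lam'_gt0 E; have E' i j := esym (E i j).
have [C_nil | C_nil] := eqVneq C [::].
  suff -> : C' = [::] by rewrite C_nil.
  by apply: (pos_lincomb_eq0 C'_chain lam'_gt0) => i j; rewrite -E C_nil /lincomb big_nil.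
have [C'_nil | C'_nil] := eqVneq C' [::].
  move: C_nil; rewrite (pos_lincomb_eq0 C_chain lam_gt0) // => i j.
  by rewrite E C'_nil /lincomb big_nil.
have [C_uniq _ C_total] := C_chain; have [C'_uniq _ C'_total] := C'_chain.
have [m mC m_min] := min_pure_le C_total C_nil.
have [m' m'C' m'_min] := min_pure_le C'_total C'_nil.
have eq_m'm : m' = m.
  apply: pure_le_anti; first exact: (min_pure_lb C_chain lam_gt0 E').
  exact: (min_pure_lb C'_chain lam'_gt0 E).
subst m'.
have lam_m : lam m = lam' m.
  apply: le_anti; rewrite (min_coef_le C_chain C'_chain lam'_gt0 E) //.
  by rewrite (min_coef_le C'_chain C_chain lam_gt0 E').
have E_rem i j : lincomb (rem m C) lam i j = lincomb (rem m C') lam' i j.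
  by apply: (@addrI _ (lam m * pure m i j)); rewrite -lincomb_rem // lam_m -lincomb_rem.
have lt_rem_k : (size (rem m C) < k)%N.
  by rewrite size_rem // -ltnS prednK // lt0n size_eq0.
have [eq_rem lam_rem] :=
  IHk _ _ _ _ lt_rem_k (pure_chain_rem m C_chain) (pure_chain_rem m C'_chain)
    (fun d d_rem => lam_gt0 d (mem_rem d_rem)) (fun d d_rem => lam'_gt0 d (mem_rem d_rem))
    E_rem.
have mem_rem_m D d : uniq D -> d != m -> (d \in rem m D) = (d \in D).
  by move=> D_uniq d_m; rewrite (mem_rem_uniq _ D_uniq) inE d_m.
split=> d; have [-> | d_m] := eqVneq d m; rewrite ?mC ?m'C' //.
  by rewrite -(mem_rem_m C) // -(mem_rem_m C') // eq_rem.
by move=> dC; apply: lam_rem; rewrite mem_rem_m.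
Qed.

Lemma lincomb_filter C (p : pred degseq) lam i j :
  {in C, forall d, ~~ p d -> lam d = 0} ->
  lincomb [seq d <- C | p d] lam i j = lincomb C lam i j.
Proof.
move=> lam0; rewrite /lincomb big_filter big_mkcond; apply: eq_big_seq => d dC /=.
by case: ifPn => // /(lam0 d dC) ->; rewrite mul0r.
Qed.

Lemma in_cone_widen D C beta : uniq D -> uniq C -> {subset D <= C} ->
  in_cone D beta -> in_cone C beta.
Proof.
move=> D_uniq C_uniq sub_DC [lam [lam_ge0 beta_lam]].
exists (fun d => if d \in D then lam d else 0); split=> [d _ | i j].
  by case: ifP => // /lam_ge0.
have perm_D : perm_eq [seq d <- C | d \in D] D.
  by apply: uniq_perm; rewrite ?filter_uniq // => d; rewrite mem_filter andb_idr // => /sub_DC.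
rewrite beta_lam -[RHS](lincomb_filter (p := mem D)) => [| d _ dD]; last by rewrite /= ifN.
by rewrite /lincomb -(perm_big _ perm_D) !big_filter; apply: eq_bigr => d dD; rewrite ifT.
Qed.

Lemma pure_chain_support C (lam : degseq -> rat) :
  pure_chain C -> {in C, forall d, 0 <= lam d} ->
  pure_chain [seq d <- C | lam d != 0] /\ {in [seq d <- C | lam d != 0], forall d, 0 < lam d}.
Proof.
move=> C_chain lam_ge0; split=> [|d]; last by rewrite mem_filter lt0r => /andP[-> /lam_ge0].
apply: (pure_chain_sub C_chain) => [|d]; last by rewrite mem_filter => /andP[].
by rewrite filter_uniq //; case: C_chain.
Qed.

Lemma in_cone_meet C C' beta : pure_chain C -> pure_chain C' ->
  (in_cone C beta /\ in_cone C' beta) <-> in_cone [seq d <- C | d \in C'] beta.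
Proof.
move=> C_chain C'_chain; have [C_uniq _ _] := C_chain; have [C'_uniq _ _] := C'_chain.
split=> [[[lam [lam_ge0 beta_lam]] [lam' [lam'_ge0 beta_lam']]] | meet_beta]; last first.
  by split; apply: in_cone_widen meet_beta; rewrite ?filter_uniq // => d;
    rewrite mem_filter => /andP[].
have lam_supp D mu i j : lincomb [seq d <- D | mu d != 0] mu i j = lincomb D mu i j.
  by rewrite lincomb_filter // => d _ /negPn/eqP.
have [S_chain S_gt0] := pure_chain_support C_chain lam_ge0.
have [S'_chain S'_gt0] := pure_chain_support C'_chain lam'_ge0.
have eq_supp i j :
    lincomb [seq d <- C | lam d != 0] lam i j = lincomb [seq d <- C' | lam' d != 0] lam' i j.
  by rewrite !lam_supp -beta_lam beta_lam'.
have [eq_S _] := pos_lincomb_inj S_chain S'_chain S_gt0 S'_gt0 eq_supp.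
exists lam; split=> [d | i j]; first by rewrite mem_filter => /andP[_ /lam_ge0].
rewrite beta_lam lincomb_filter // => d dC dC'; apply/eqP; apply: contraNT dC' => lam_d.
by have := eq_S d; rewrite !mem_filter lam_d dC => /esym/andP[].
Qed.

Theorem proposition3p1 (n : nat) (M N : int) :
  (1 <= n)%N -> M <= N ->
  (forall C, is_chain n M N C ->
     forall lam : degseq -> rat,
       (forall i j, lincomb C lam i j = 0) -> forall d, d \in C -> lam d = 0) /\
  (forall C C', is_chain n M N C -> is_chain n M N C' ->
     forall beta : diagram,
       (in_cone C beta /\ in_cone C' beta) <->
       in_cone [seq d <- C | d \in C'] beta) /\
  (forall C C' (lam lam' : degseq -> rat),
     is_chain n M N C -> is_chain n M N C' ->
     (forall d, d \in C -> 0 < lam d) -> (forall d, d \in C' -> 0 < lam' d) ->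
     (forall i j, lincomb C lam i j = lincomb C' lam' i j) ->
     C =i C' /\ (forall d, d \in C -> lam d = lam' d)).
Proof.
move=> _ _; split; [|split].
- by move=> C /is_chain_pure_chain C_chain lam; apply: pure_chain_lincomb_eq0.
- by move=> C C' /is_chain_pure_chain C_chain /is_chain_pure_chain C'_chain beta;
    apply: in_cone_meet.
- by move=> C C' lam lam' /is_chain_pure_chain C_chain /is_chain_pure_chain C'_chain;
    apply: pos_lincomb_inj.
Qed.
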